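(* Let $\mathbb{K}\in\{\mathbb{R},\mathbb{C}\}$ and let $\mathcal{X}$ be a topological $\mathbb{K}$-vector space whose topological dual $\mathcal{X}^{\ast}$ separates the points of $\mathcal{X}$. Then the map $\overline{\mathrm{co}}:\mathbf{F}(\mathcal{X}^{\ast})\to\mathbf{CF}(\mathcal{X}^{\ast})$, $F\mapsto\overline{\mathrm{co}}F$, is surjective and continuous, both spaces being endowed with the weak*-Hausdorff hypertopology.
   Context: Topological vector spaces are Hausdorff. $\mathcal{X}^{\ast}$ carries the weak* topology. $\mathbf{F}(\mathcal{X}^{\ast})$ is the set of nonempty weak*-closed subsets of $\mathcal{X}^{\ast}$, $\mathbf{CF}(\mathcal{X}^{\ast})$ the subset of convex ones, and $\overline{\mathrm{co}}F$ is the weak*-closure of the convex hull of $F$. The weak*-Hausdorff hypertopology on $\mathbf{F}(\mathcal{X}^{\ast})$ (and its subspaces) is the topology generated by the extended pseudometrics $d_H^{(A)}(F,\tilde F)=\max\{\sup_{\sigma\in F}\inf_{\tilde\sigma\in\tilde F}|(\sigma-\tilde\sigma)(A)|,\ \sup_{\tilde\sigma\in\tilde F}\inf_{\sigma\in F}|(\sigma-\tilde\sigma)(A)|\}\in[0,\infty]$, $A\in\mathcal{X}$. *)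

From HB Require Import structures.
From mathcomp Require Import all_boot all_order all_algebra.
From mathcomp Require Import all_classical all_reals all_analysis.
From mathcomp Require Import complex.

Set Implicit Arguments.
Unset Strict Implicit.
Unset Printing Implicit Defensive.

Import Order.TTheory GRing.Theory Num.Theory.
Import numFieldTopology.Exports.

Local Open Scope classical_set_scope.
Local Open Scope ring_scope.

Section Hyper.
(* Scalars K (a numFieldType with its norm topology), a realType R in which
   the absolute value |.| of K is read (abs : K -> R). *)
Variables (R : realType) (K : numFieldType) (abs : K -> R).
Variable (X : topologicalLmodType K).

Definition dual : set (X -> K) :=
  [set f | (forall (a : K) (x y : X), f (a *: x + y) = a * f x + f y)
           /\ continuous f].

Definition dual_separates : Prop :=
  forall x y : X, x <> y -> exists2 f, dual f & f x <> f y.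

(* Weak* topology on X^star = subspace topology of X^star inside {ptws X -> K}
   (pointwise convergence = initial topology of the evaluations). *)
Definition wstar_closure (F : set (X -> K)) : set (X -> K) :=
  dual `&` @closure {ptws X -> K} F.

Definition wstar_closed (F : set (X -> K)) : Prop :=
  F `<=` dual /\ wstar_closure F `<=` F.

Definition conv_hull (F : set (X -> K)) : set (X -> K) :=
  [set g | exists n (l : 'I_n -> K) (s : 'I_n -> X -> K),
      [/\ forall i, 0 <= l i, \sum_(i < n) l i = 1, forall i, F (s i)
        & forall A, g A = \sum_(i < n) l i * s i A]].

Definition clco (F : set (X -> K)) : set (X -> K) :=
  wstar_closure (conv_hull F).

Definition convex_fset (F : set (X -> K)) : Prop :=
  forall f g (t : K), F f -> F g -> 0 <= t -> t <= 1 ->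
    F (fun A => t * f A + (1 - t) * g A).

Definition FF : set (set (X -> K)) :=
  [set F | F !=set0 /\ wstar_closed F].
Definition CFF : set (set (X -> K)) :=
  [set F | FF F /\ convex_fset F].

Definition hexcess (A : X) (F G : set (X -> K)) : \bar R :=
  ereal_sup [set ereal_inf [set ((abs (s A - t A))%:E)%E | t in G] | s in F].

Definition dH (A : X) (F G : set (X -> K)) : \bar R :=
  maxe (hexcess A F G) (hexcess A G F).

(* Open sets of the weak*-Hausdorff hypertopology on a family S of sets:
   topology generated by the family (dH A)_{A in X} restricted to S. *)
Definition hyper_open (S U : set (set (X -> K))) : Prop :=
  U `<=` S /\
  forall F, U F -> exists n (As : 'I_n -> X) (e : R), 0 < e /\
    forall G, S G -> (forall i, (dH (As i) F G < e%:E)%E) -> U G.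

Definition prop312 : Prop :=
  dual_separates -> hausdorff_space X ->
  [/\ (forall F, FF F -> CFF (clco F)),
      (forall C, CFF C -> exists2 F, FF F & clco F = C) &
      (forall V, hyper_open CFF V -> hyper_open FF (FF `&` (clco @^-1` V)))].

End Hyper.

From HB Require Import structures.
From mathcomp Require Import all_boot all_order all_algebra.
From mathcomp Require Import all_classical all_reals all_analysis.
From mathcomp Require Import complex.
From mathcomp Require Import ring.
Import Order.TTheory GRing.Theory Num.Theory.
Import numFieldTopology.Exports numFieldNormedType.Exports.
Local Open Scope ring_scope.
Local Open Scope classical_set_scope.

(** Surjectivity holds because closed convex sets are fixed points of
    [clco].  For continuity, [clco] does not increase any [d_H^(A)]: an
    element of [clco F] is, at the point [A], within [e] of a convex
    combination [sum l_i s_i] of elements of [F]; choosing [t_i] in [G] with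
    [|s_i A - t_i A| < r] for any [r] above the excess of [F] over [G], the
    combination [sum l_i t_i] lies in [clco G] and is within [r + e] at [A]. *)

Lemma closure_sub_preimage {T U : topologicalType} {f : T -> U}
    {A : set T} {B : set U} :
  continuous f -> closed B -> A `<=` f @^-1` B -> closure A `<=` f @^-1` B.
Proof.
move=> cf clB AB; rewrite closureE; apply: smallest_sub => //.
by apply: preimage_closed => // x _; exact: cf.
Qed.

Lemma lee_gtEFin (R : realFieldType) (x y : \bar R) :
  (forall r : R, (x < r%:E)%E -> (y <= r%:E)%E) -> (y <= x)%E.
Proof.
case: x => [x| |] yx; last 2 first.
- exact: leey.
- case: y yx => [y| |] yx //; last by have := yx 0 (ltNyr _).
  by have := yx (y - 1) (ltNyr _); rewrite lee_fin leNgt gtrBl ltr01.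
apply/lee_addgt0Pr => e e0; apply: yx.
by rewrite lte_fin ltrDl.
Qed.

Section Convexity.
Context {K : numFieldType} {X : topologicalLmodType K}.

Lemma ptws_eval_cvg (f : {ptws X -> K}) (x : X) :
  (fun u : X -> K => u x) @ f --> f x.
Proof. by have [+ _] := @pointwise_cvgP X K (nbhs f) f _; apply; exact: cvg_id. Qed.

Lemma ptws_affine_continuous (t : K) (g : X -> K) :
  continuous (fun f : {ptws X -> K} => (fun x => t * f x + g x) : {ptws X -> K}).
Proof.
move=> f; set h := fun f : {ptws X -> K} => _.
have [_] := pointwise_cvgP (h f) (fmap_filter h (nbhs_filter f)); apply => x.
by apply: cvgD; [apply: cvgMl_tmp; exact: ptws_eval_cvg | exact: cvg_cst].
Qed.

Definition lincomb {n} (l : 'I_n -> K) (s : 'I_n -> X -> K) : X -> K :=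
  fun A => \sum_(i < n) l i * s i A.

Lemma dual_lincomb n (l : 'I_n -> K) (s : 'I_n -> X -> K) :
  (forall i, dual (s i)) -> dual (lincomb l s).
Proof.
move=> ds; split.
  move=> a x y; rewrite /lincomb mulr_sumr -big_split /=.
  by apply: eq_bigr => i _; case: (ds i) => -> _; ring.
apply: continuous_big => [|i _ x]; first exact: add_continuous.
by apply: cvgMl_tmp; case: (ds i) => _; exact.
Qed.

Lemma convex_dual : convex_fset (@dual K X).
Proof.
move=> f g t [fl fc] [gl gc] _ _; split.
  by move=> a x y; rewrite fl gl; ring.
by move=> x; apply: cvgD; apply: cvgMl_tmp; [exact: fc | exact: gc].
Qed.

Lemma sub_conv_hull (F : set (X -> K)) : F `<=` conv_hull F.
Proof.
move=> f Ff; exists 1%N, (fun _ => 1), (fun _ => f); split => //.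
- by rewrite big_ord1.
- by move=> A; rewrite big_ord1 mul1r.
Qed.

Lemma convex_conv_hull (F : set (X -> K)) : convex_fset (conv_hull F).
Proof.
move=> f g t [n [l [s [l0 l1 Fs fE]]]] [m [l' [s' [l0' l1' Fs' gE]]]] t0 t1.
pose L i := match fintype.split i with
  | inl j => t * l j | inr j => (1 - t) * l' j end.
pose S i := match fintype.split i with inl j => s j | inr j => s' j end.
have sl i : fintype.split (lshift m i) = inl i := unsplitK (inl i).
have sr i : fintype.split (rshift n i) = inr i := unsplitK (inr i).
exists (n + m)%N, L, S; split.
- move=> i; rewrite /L; case: (fintype.split i) => j.
    by rewrite mulr_ge0.
  by rewrite mulr_ge0 // subr_ge0.
- rewrite big_split_ord /L /=.
  under eq_bigr do rewrite sl.
  under [X in _ + X]eq_bigr do rewrite sr.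
  by rewrite -!mulr_sumr l1 l1' !mulr1 addrC subrK.
- by move=> i; rewrite /S; case: (fintype.split i).
- move=> A; rewrite big_split_ord /L /S /=.
  under eq_bigr do rewrite sl.
  under [X in _ = _ + X]eq_bigr do rewrite sr.
  rewrite fE gE !mulr_sumr.
  by congr (_ + _); apply: eq_bigr => i _; rewrite mulrA.
Qed.

Lemma convex_closure (C : set {ptws X -> K}) :
  convex_fset C -> convex_fset (closure C).
Proof.
have swap t (f g : X -> K) :
    (fun x => (1 - t) * g x + t * f x) = (fun x => t * f x + (1 - t) * g x).
  by apply: funext => x; rewrite addrC.
move=> cC f g t Cf Cg t0 t1.
have Cf_ g' : C g' -> closure C (fun x => t * f x + (1 - t) * g' x).
  move=> Cg'; apply: (closure_sub_preimage (ptws_affine_continuous _ _)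
    (@closed_closure _ C) _ _ Cf).
  by move=> h Ch /=; apply: subset_closure; exact: cC.
rewrite -swap; apply: (closure_sub_preimage (ptws_affine_continuous _ _)
  (@closed_closure _ C) _ _ Cg).
by move=> h Ch /=; rewrite swap; exact: Cf_.
Qed.

Lemma conv_hull_convex_sub (C : set (X -> K)) :
  convex_fset C -> conv_hull C `<=` C.
Proof.
move=> cC g [n [l [s [l0 l1 Cs gE]]]].
have -> : g = lincomb l s by apply: funext.
elim: n l s l0 l1 Cs {gE} => [|n IH] l s l0 l1 Cs.
  by move: l1; rewrite big_ord0 => /eqP; rewrite eq_sym oner_eq0.
pose b := \sum_(i < n) l (widen_ord (leqnSn n) i).
have b0 : 0 <= b by apply: sumr_ge0.
have lmax : l ord_max = 1 - b by rewrite -l1 big_ord_recr /= /b; ring.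
have [bz | bnz] := eqVneq b 0.
  have lz i : l (widen_ord (leqnSn n) i) = 0.
    by apply: (psumr_eq0P (fun i _ => l0 _) bz).
  have -> : lincomb l s = s ord_max.
    apply: funext => A; rewrite /lincomb big_ord_recr /= lmax bz subr0 mul1r.
    by rewrite big1 ?add0r // => i _; rewrite lz mul0r.
  exact: Cs.
pose h := lincomb (fun i => l (widen_ord (leqnSn n) i) / b)
                  (fun i => s (widen_ord (leqnSn n) i)).
have Ch : C h.
  apply: IH => //; first by move=> i; rewrite divr_ge0.
  by rewrite -mulr_suml divff.
have -> : lincomb l s = fun A => b * h A + (1 - b) * s ord_max A.
  apply: funext => A; rewrite /lincomb /h /lincomb big_ord_recr /= lmax.
  rewrite mulr_sumr; congr (_ + _); apply: eq_bigr => i _.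
  by rewrite mulrA [b * _]mulrC divfK.
by apply: cC => //; rewrite -subr_ge0 -lmax.
Qed.

Lemma wstar_closed_closure (F : set (X -> K)) :
  wstar_closed (wstar_closure F).
Proof.
split=> [g [] //|g [Dg clg]]; split => //.
move: clg => /(closureS (@subIsetr _ _ _)).
by rewrite -(closure_id _).1 //; exact: closed_closure.
Qed.

Lemma convex_wstar_closure (F : set (X -> K)) :
  convex_fset F -> convex_fset (wstar_closure F).
Proof.
move=> cF f g t [Df clf] [Dg clg] t0 t1; split; first exact: convex_dual.
exact: convex_closure.
Qed.

Lemma sub_clco (F : set (X -> K)) : F `<=` @dual K X -> F `<=` clco F.
Proof.
by move=> FD f Ff; split; [exact: FD | apply: subset_closure; exact: sub_conv_hull].
Qed.

Lemma clco_CFF (F : set (X -> K)) : FF F -> CFF (clco F).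
Proof.
move=> [[f Ff] [FD _]]; split; last exact/convex_wstar_closure/convex_conv_hull.
by split; [exists f; exact: sub_clco | exact: wstar_closed_closure].
Qed.

Lemma clco_id (C : set (X -> K)) : CFF C -> clco C = C.
Proof.
move=> [[_ [CD Ccl]] cC]; apply/seteqP; split; last exact: sub_clco.
move=> g [Dg clg]; apply: Ccl; split => //.
by move: clg; apply: closureS; exact: conv_hull_convex_sub.
Qed.

End Convexity.

Section Nonexpansive.
Variables (R : realType) (K : numFieldType) (X : topologicalLmodType K).
Variables (abs : K -> R) (io : {rmorphism R -> K}).
Hypotheses (io_mono : {mono io : a b / a <= b})
  (normE : forall x : K, `|x| = io (abs x)).

Lemma conv_hull_excess {A : X} {F G : set (X -> K)} {r : R} {s : X -> K} :
  (hexcess abs A F G < r%:E)%E -> conv_hull F s ->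
  exists2 t, conv_hull G t & `|s A - t A| <= io r.
Proof.
move=> Fr [n [l [ss [l0 l1 Fss sE]]]].
have approx i : exists t, G t /\ abs (ss i A - t A) < r.
  have : (ereal_inf [set (abs (ss i A - t A))%:E | t in G] < r%:E)%E.
    by apply: le_lt_trans Fr; apply: ereal_sup_ubound; exists (ss i).
  by move=> /ereal_inf_lt [_ [t Gt <-]]; rewrite lte_fin; exists t.
have [tt Htt] := choice approx.
exists (lincomb l tt).
  by exists n, l, tt; split => // i; exact: (Htt i).1.
rewrite sE /lincomb -sumrB; apply: le_trans (ler_norm_sum _ _ _) _.
rewrite -[io r]mul1r -l1 mulr_suml; apply: ler_sum => i _.
rewrite -mulrBr normrM ger0_norm // ler_wpM2l // normE io_mono.
exact: ltW (Htt i).2.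
Qed.

Lemma clco_excess {A : X} {F G : set (X -> K)} {r e : R} {s : X -> K} :
  G `<=` @dual K X -> (hexcess abs A F G < r%:E)%E -> 0 < e -> clco F s ->
  exists2 t, clco G t & abs (s A - t A) <= r + e.
Proof.
move=> GD Fr e0 [_ cls].
have ie0 : 0 < io e by rewrite -(rmorph0 io) (leW_mono io_mono).
have near_s : \forall u \near (s : {ptws X -> K}), `|s A - u A| < io e.
  move: (ptws_eval_cvg s A) => /cvgrPdist_lt /(_ (io e) ie0); apply.
  exact: (@nbhs_filter {ptws X -> K} s).
have [s' [Fs' s'A]] := cls _ near_s.
have [t Gt tA] := conv_hull_excess Fr Fs'.
exists t.
  split; last exact: subset_closure.
  case: Gt => [m [l [tt [_ _ Gtt tE]]]].
  have -> : t = lincomb l tt by apply: funext.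
  by apply: dual_lincomb => i; exact/GD/Gtt.
rewrite -io_mono -normE rmorphD.
have -> : s A - t A = (s' A - t A) + (s A - s' A) by ring.
by apply: le_trans (ler_normD _ _) _; apply: lerD => //; exact: ltW.
Qed.

Lemma hexcess_clco_le (A : X) (F G : set (X -> K)) : G `<=` @dual K X ->
  (hexcess abs A (clco F) (clco G) <= hexcess abs A F G)%E.
Proof.
move=> GD; apply: ge_ereal_sup => _ [s Fs <-].
apply: lee_gtEFin => r Fr; apply/lee_addgt0Pr => e e0.
have [t Gt tA] := clco_excess GD Fr e0 Fs.
by apply: ge_ereal_inf; exists (abs (s A - t A))%:E; [exists t | rewrite lee_fin].
Qed.

Lemma dH_clco_le (A : X) (F G : set (X -> K)) :
  F `<=` @dual K X -> G `<=` @dual K X ->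
  (dH abs A (clco F) (clco G) <= dH abs A F G)%E.
Proof.
move=> FD GD; rewrite /dH ge_max !le_max.
by rewrite !hexcess_clco_le ?orbT.
Qed.

Lemma clco_hyper_continuous (V : set (set (X -> K))) :
  hyper_open abs (@CFF K X) V ->
  hyper_open abs (@FF K X) (@FF K X `&` (@clco K X @^-1` V)).
Proof.
move=> [VC HV]; split=> [F [] //|F [FF_F VF]].
have [n [As [e [e0 He]]]] := HV _ VF.
exists n, As, e; split => // G FF_G dFG; split => //.
apply: He => [|i]; first exact: clco_CFF.
apply: le_lt_trans (dFG i); apply: dH_clco_le.
- by case: FF_F => _ [].
- by case: FF_G => _ [].
Qed.

Lemma prop312_norm_embedding : prop312 abs X.
Proof.
move=> _ _; split; first exact: clco_CFF.
  by move=> C CC; exists C; [case: CC | exact: clco_id].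
exact: clco_hyper_continuous.
Qed.

End Nonexpansive.

Theorem proposition3p12 (R : realType) :
  (forall X : topologicalLmodType R,
      prop312 (fun x : R => `|x|) X) /\
  (forall X : topologicalLmodType R[i],
      prop312 (fun z : R[i] => complex.Re `|z|) X).
Proof.
split => X.
- exact: (@prop312_norm_embedding R R X _ idfun).
- apply: (@prop312_norm_embedding R R[i] X _ (real_complex R)).
  + exact: lecR.
  + by case. (* the norm of [a +i* b] is built with imaginary part [0] *)
Qed.
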